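(* Let $b\ge 2$ with $b\not\equiv 1\pmod 3$, and let $n\ge 2$. Then $$g(T_{b'}(n)) = 3b + \frac{b^{2n}(b^3+b^2-b-1) + b^{n}\{b^2(n+1)-(n+3)\}}{2}.$$
   Context: For integers $b\ge2$ with $b\not\equiv1\pmod3$, $n\ge0$, $i\ge0$ put $s'_i=(b+1)b^{n+i}+1$, and $T_{b'}(n)=\langle\{s'_i:i\in\mathbb{N}\}\rangle$ (submonoid of $(\mathbb{N},+)$ generated by them, a numerical semigroup). The genus $g(S)$ is the cardinality of $\mathbb{N}\setminus S$. *)

From mathcomp Require Import all_boot.
Set Implicit Arguments. Unset Strict Implicit. Unset Printing Implicit Defensive.

Inductive in_monoid (A : nat -> Prop) : nat -> Prop :=
| in_monoid0 : in_monoid A 0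
| in_monoid_add : forall a x, A a -> in_monoid A x -> in_monoid A (a + x).

Definition sgen (b n i : nat) : nat := (b + 1) * b ^ (n + i) + 1.

Definition Tb' (b n : nat) : nat -> Prop :=
  in_monoid (fun a => exists i, a = sgen b n i).

Definition has_genus (S : nat -> Prop) (g : nat) : Prop :=
  exists s : seq nat, uniq s /\ (forall x, x \in s <-> ~ S x) /\ size s = g.

(* Unfolding the generators, T_b'(n) is the set of all [size l + c * \sum_(i <- l) b ^ i] with
   c = (b + 1) b^n.  A number M is a sum of exactly k powers of b iff k <= M, k = M modulo b - 1,
   and the base-b digit sum of M is at most k.  Writing x = r + c q with r < c, it follows that x
   lies in T_b'(n) iff either q is a sum of r powers of b, or q >= r + (c + 1) tau, where tau is
   the solution in [1, b - 1] of r + 3 tau = q modulo b - 1 (3 is invertible modulo b - 1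
   because b <> 1 modulo 3).  Counting, residue by residue, the q that fail both conditions
   reduces the genus to sums of the Legendre function [\sum_(k >= 1) q %/ b ^ k] over ranges
   [0, b ^ K), which have closed forms. *)

From mathcomp Require Import all_boot zify.
Set Implicit Arguments. Unset Strict Implicit. Unset Printing Implicit Defensive.

Lemma double_sum_id n : 2 * \sum_(0 <= i < n) i + n = n * n.
Proof. by rewrite bin2_sum -(mul_bin_diag n 1) bin1; case: n => // n /=; lia. Qed.

Lemma sum_block (F : nat -> nat) m N :
  \sum_(0 <= i < m * N) F i = \sum_(0 <= a < N) \sum_(0 <= e < m) F (m * a + e).
Proof.
rewrite mulnC big_nat_mul; apply: eq_bigr => a _.
have := big_addn 0 (a.+1 * m) (a * m) xpredT F; rewrite add0n => ->.
by rewrite mulSn addnK; apply: eq_bigr => e _; rewrite addnC mulnC.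
Qed.

Lemma sum_nat_shift (F : nat -> nat) m n :
  \sum_(0 <= i < m + n) F i = \sum_(0 <= i < m) F i + \sum_(0 <= i < n) F (m + i).
Proof.
rewrite (@big_cat_nat _ _ _ m) ?leq_addr //=.
have := big_addn 0 (m + n) m xpredT F; rewrite add0n addKn => ->.
by congr (_ + _); apply: eq_bigr => i _; rewrite addnC.
Qed.

Lemma sum_ltn_indicator m N : m <= N -> \sum_(0 <= a < N) (a < m) = m.
Proof.
move=> le_mN; rewrite (@big_cat_nat _ _ _ m) //=.
rewrite (eq_big_nat _ _ (F2 := fun=> 1)) => [|i /andP[_ ->]] //.
rewrite [X in _ + X]big1_seq => [|i /andP[_]]; last first.
  by rewrite mem_index_iota => /andP[le_mi _]; rewrite ltnNge le_mi.
by rewrite sum_nat_const_nat subn0 muln1 addn0.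
Qed.

Lemma sum_range_indicator lo hi N :
  \sum_(0 <= j < N.+1) ((lo < j) && (j <= hi)) = minn N hi - lo.
Proof.
elim: N => [|N IH]; first by rewrite big_nat1; case: lo; case: hi.
by rewrite big_nat_recr //= IH; case: (ltnP lo N.+1); case: (leqP N.+1 hi); lia.
Qed.

Lemma sum_nat_window (F : nat -> nat) a K T : a + K <= T ->
  \sum_(0 <= i < K) F (i + a) = \sum_(0 <= q < T) ((a <= q) && (q < a + K)) * F q.
Proof.
move=> le_T; have := big_addn 0 (a + K) a xpredT F; rewrite add0n addKn => <-.
rewrite (@big_nat_widenl _ _ _ a 0) // (big_nat_widen _ _ _ _ _ le_T) big_mkcond /=.
by apply: eq_bigr => q _; case: (a <= q); case: (q < a + K); rewrite ?mul0n ?mul1n.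
Qed.

Lemma mul_subn1_add b' x : 0 < b' -> (b' - 1) * x + x = b' * x.
Proof. by move=> b'_gt0; rewrite -mulSnr subn1 prednK. Qed.

Lemma eq_mod_in_range d x y : 0 < x <= d -> 0 < y <= d -> x = y %[mod d] -> x = y.
Proof.
move=> /andP[x_gt0 le_xd] /andP[y_gt0 le_yd] xy_mod.
have : x.-1 == y.-1 %[mod d] by rewrite -(eqn_modDr 1) !addn1 !prednK // xy_mod.
have lt_pred z : 0 < z <= d -> z.-1 < d by case: z => // z; rewrite ltnS.
by rewrite !modn_small ?lt_pred ?x_gt0 ?y_gt0 // => /eqP; lia.
Qed.

Definition inv3 d := if d %% 3 == 2 then d %/ 3 + 1 else 2 * (d %/ 3) + 1.

Lemma inv3P d : d %% 3 != 0 -> 3 * inv3 d = 1 %[mod d].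
Proof.
rewrite /inv3 => d_mod; have := divn_eq d 3; have := ltn_pmod d (isT : 0 < 3).
case: eqP => d_mod2 _ d_eq.
- have -> : 3 * (d %/ 3 + 1) = 1 + d by lia.
  by rewrite modnDr.
- have -> : 3 * (2 * (d %/ 3) + 1) = 2 * d + 1 by lia.
  by rewrite modnMDl.
Qed.

Lemma mul3_modK d x y : d %% 3 != 0 -> 3 * x = 3 * y %[mod d] -> x = y %[mod d].
Proof.
move=> d_mod e3; have mul_inv z : z = 3 * z * inv3 d %[mod d].
  by rewrite mulnAC -modnMm inv3P // modnMm mul1n.
by rewrite mul_inv [RHS]mul_inv -modnMml e3 modnMml.
Qed.

Section Legendre.
Variable b : nat.
Hypothesis hb : 1 < b.

Lemma pow_ge_mul m : 0 < m -> b * m <= b ^ m.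
Proof.
elim: m => // [[_ _|m IH _]]; first by rewrite muln1 expn1.
rewrite expnS leq_pmul2l ?(ltnW hb) //; apply: leq_trans (IH isT).
have := leq_mul hb (leqnn m.+1); lia.
Qed.

(* [(b - 1) * legendre q] is q minus the base-b digit sum of q. *)
Definition legendre q := \sum_(0 <= k < q) q %/ b ^ k.+1.

Lemma legendre_widen q N : q <= N -> \sum_(0 <= k < N) q %/ b ^ k.+1 = legendre q.
Proof.
move=> le_qN; rewrite /legendre (@big_cat_nat _ _ _ q) //= [X in _ + X]big1_seq ?addn0 //.
move=> k /andP[_]; rewrite mem_index_iota => /andP[le_qk _]; rewrite divn_small //.
by apply: leq_ltn_trans (ltn_expl k.+1 hb); rewrite ltnW.
Qed.

Lemma legendre0 : legendre 0 = 0.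
Proof. by rewrite /legendre big_geq. Qed.

Lemma legendre_rec q : legendre q = q %/ b + legendre (q %/ b).
Proof.
case: q => [|q]; first by rewrite div0n legendre0.
rewrite /legendre big_nat_recl // expn1; congr (_ + _).
rewrite -[RHS]/(legendre _) -(legendre_widen (N := q)); last by rewrite -ltnS ltn_Pdiv.
by apply: eq_bigr => k _; rewrite expnS divnMA.
Qed.

Lemma legendre_small q : q < b -> legendre q = 0.
Proof. by move=> lt_qb; rewrite legendre_rec divn_small // legendre0. Qed.

Lemma leq_div_legendre q : q %/ b <= legendre q.
Proof. by rewrite legendre_rec leq_addr. Qed.

Lemma legendre_homo : {homo legendre : q1 q2 / q1 <= q2}.
Proof.
move=> q1 q2 le_q; rewrite -(legendre_widen le_q) /legendre.
by apply: leq_sum => k _; apply: leq_div2r.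
Qed.

Lemma legendre_superadditive x y : legendre x + legendre y <= legendre (x + y).
Proof.
rewrite -(legendre_widen (leq_addr y x)) -(legendre_widen (leq_addl x y)) -big_split.
by apply: leq_sum => k _; rewrite divnD ?expn_gt0 ?(ltnW hb) // leq_addr.
Qed.

Lemma legendre_leq q : (b - 1) * legendre q <= q.
Proof.
elim/ltn_ind: q => q IH; case: (posnP q) => [->|q_gt0]; first by rewrite legendre0 muln0.
rewrite legendre_rec mulnDr; apply: leq_trans (leq_add (leqnn _) (IH _ (ltn_Pdiv hb q_gt0))) _.
by rewrite -mulSnr subn1 prednK ?(ltnW hb) // mulnC leq_divM.
Qed.

Lemma legendre_pow j : (b - 1) * legendre (b ^ j) + 1 = b ^ j.
Proof.
elim: j => [|j IH]; first by rewrite legendre_small // muln0.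
by rewrite legendre_rec expnS mulKn ?(ltnW hb) // mulnDr -addnA IH mul_subn1_add ?(ltnW hb).
Qed.

Lemma legendre_bmul a e : e < b -> legendre (b * a + e) = a + legendre a.
Proof. by move=> lt_eb; rewrite legendre_rec mulnC divnMDl ?(ltnW hb) // divn_small ?addn0. Qed.

Lemma legendre_digits K q : q < b ^ K -> q <= (b - 1) * legendre q + (b - 1) * K.
Proof.
elim: K q => [|K IH] q lt_q; first by move: lt_q; rewrite expn0 ltnS leqn0 => /eqP->.
have lt_qb : q %/ b < b ^ K by rewrite ltn_divLR -?expnSr // ltnW.
rewrite (legendre_rec q) mulnDr mulnS.
have := IH _ lt_qb; have := ltn_pmod q (ltnW hb); have := divn_eq q b.
rewrite mulnC -mul_subn1_add ?(ltnW hb) //.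
move: (legendre (q %/ b)) (q %/ b) (q %% b) => L Q R; lia.
Qed.

Lemma legendre_shift K x y : y < b ^ K ->
  (b - 1) * legendre (x * b ^ K + y) + x
  = (b - 1) * legendre x + x * b ^ K + (b - 1) * legendre y.
Proof.
elim: K y => [|K IH] y lt_y.
  by move: lt_y; rewrite expn0 ltnS leqn0 => /eqP->; rewrite muln1 addn0 legendre0 muln0 addn0.
have lt_yb : y %/ b < b ^ K by rewrite ltn_divLR -?expnSr // ltnW.
rewrite legendre_rec (legendre_rec y).
have -> : (x * b ^ K.+1 + y) %/ b = x * b ^ K + y %/ b.
  by rewrite expnSr mulnA divnMDl // ltnW.
have := IH _ lt_yb; rewrite !mulnDr expnS mulnCA -(mul_subn1_add _ (ltnW hb)); lia.
Qed.

Lemma sum_legendre_pow K :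
  2 * (b - 1) * \sum_(0 <= q < b ^ K) legendre q + K * (b - 1) * b ^ K + b ^ K
  = b ^ K * b ^ K.
Proof.
elim: K => [|K IH]; first by rewrite expn0 big_nat1 legendre0 muln0 !mul0n.
rewrite expnS sum_block.
rewrite (eq_bigr (fun a => b * (a + legendre a))) => [|a _]; last first.
  rewrite (eq_big_nat _ _ (F2 := fun=> a + legendre a)) => [|e /andP[_]]; last exact: legendre_bmul.
  by rewrite sum_nat_const_nat subn0.
rewrite -big_distrr big_split /=.
have := double_sum_id (b ^ K); move: IH.
move: (\sum_(0 <= q < b ^ K) legendre q) (\sum_(0 <= i < b ^ K) i) (b ^ K) => W I P.
have -> : b = (b - 1).+1 by rewrite subn1 prednK // ltnW.
move: (b - 1) => d; rewrite subn1 /= => e1 e2.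
have := congr1 (muln d.+1) e1; have := congr1 (muln d) e2; nia.
Qed.

End Legendre.

Section PowerSums.
Variable b : nat.
Hypothesis hb : 1 < b.

Definition powsum (l : seq nat) := \sum_(i <- l) b ^ i.

Definition powsum_cond k M :=
  [&& k <= M, M == k %[mod b - 1] & M <= k + (b - 1) * legendre b M].

Lemma modn_pred : b = 1 %[mod b - 1].
Proof. by rewrite -{1}(subnK (ltnW hb)) modnDl. Qed.

Lemma expn_mod_pred i : b ^ i = 1 %[mod b - 1].
Proof. by rewrite -modnXm modn_pred modnXm exp1n. Qed.

Lemma powsum_cond_seq l : powsum_cond (size l) (powsum l).
Proof.
rewrite /powsum_cond /powsum; elim: l => [|i l /and3P[IH1 /eqP IH2 IH3]].
  by rewrite big_nil legendre0 muln0 /= eqxx.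
rewrite big_cons /=; set M := \sum_(j <- l) b ^ j in IH1 IH2 IH3 *.
have pow_gt0 : 0 < b ^ i by rewrite expn_gt0 ltnW.
apply/and3P; split; first by rewrite -add1n leq_add.
  by rewrite -modnDm IH2 expn_mod_pred modnDm add1n.
have := leq_mul (leqnn (b - 1)) (legendre_superadditive hb (b ^ i) M).
have := legendre_pow hb i; rewrite mulnDr; lia.
Qed.

Lemma powsum01_exists k M : k <= M <= k * b -> (b - 1) %| M - k ->
  exists2 l, size l = k & powsum l = M.
Proof.
move=> /andP[le_kM le_Mkb] /dvdnP[N eN].
have le_Nk : N <= k.
  rewrite -(leq_pmul2r (_ : 0 < b - 1)) ?subn_gt0 // -eN leq_subLR.
  by rewrite mulnC -[k in k + _]mul1n -mulnDl subnKC ?(ltnW hb) // mulnC.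
exists (nseq (k - N) 0 ++ nseq N 1); first by rewrite size_cat !size_nseq subnK.
rewrite /powsum big_cat /= !big_nseq !iter_addn_0 expn0 expn1.
have := mul_subn1_add N (ltnW hb); lia.
Qed.

Lemma powsum_exists k M : powsum_cond k M -> exists2 l, size l = k & powsum l = M.
Proof.
elim/ltn_ind: M k => M IH k /and3P[le_kM /eqP kM le_Mw].
have [lt_Mb|le_bM] := ltnP M b.
  move: le_Mw; rewrite legendre_small // muln0 addn0 => le_Mk.
  exists (nseq k 0); first by rewrite size_nseq.
  by rewrite /powsum big_nseq iter_addn_0 expn0 mul1n; lia.
have lt_eb := ltn_pmod M (ltnW hb).
have M_eq : M = b * (M %/ b) + M %% b by rewrite mulnC -divn_eq.
move: le_Mw; rewrite (legendre_rec hb) mulnDr.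
have := legendre_leq hb (M %/ b); have := mul_subn1_add (M %/ b) (ltnW hb).
move: M_eq lt_eb; move: (M %/ b) (M %% b) => M' e.
move=> M_eq lt_eb bM' wM' le_Mw.
have [le_k|lt_k] := leqP k (M' + e); last first.
  apply: powsum01_exists; first by have := leq_mul lt_k (leqnn b); lia.
  by rewrite -eqn_mod_dvd // kM.
have le_ek : e <= k by lia.
have cond' : powsum_cond (k - e) M'.
  apply/and3P; split; [lia | | lia].
  have M_mod : M = M' + e %[mod b - 1].
    by rewrite M_eq -modnDml -modnMml modn_pred modnMml mul1n modnDml.
  by rewrite -(eqn_modDr e) subnK // -M_mod kM.
have lt_M' : M' < M.
  have M'_gt0 : 0 < M' by move: le_bM; rewrite M_eq; case: (M') => //; rewrite muln0; lia.
  by rewrite M_eq (leq_trans _ (leq_addr e _)) // ltn_Pmull.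
have [l size_l sum_l] := IH M' lt_M' _ cond'.
exists (nseq e 0 ++ map S l); first by rewrite size_cat size_nseq size_map size_l subnKC.
rewrite M_eq -sum_l /powsum big_cat big_nseq iter_addn_0 expn0 mul1n big_map big_distrr addnC.
by congr (_ + _); apply: eq_bigr => i _; rewrite expnS.
Qed.

Lemma powsumP k M : reflect (exists2 l, size l = k & powsum l = M) (powsum_cond k M).
Proof. by apply: (iffP idP) => [|[l <- <-]]; [exact: powsum_exists | exact: powsum_cond_seq]. Qed.

End PowerSums.

Section Tau.
Variable b : nat.
Hypotheses (hb : 1 < b) (h3 : (b - 1) %% 3 != 0).

(* The solution t of r + 3 t = q (mod b - 1), taken in [1, b - 1] rather than [0, b - 2]. *)
Definition tau r q :=
  let d := b - 1 in ((q + (d - 1) * r) * inv3 d + (d - 1)) %% d + 1.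

Lemma tau_bounds r q : 0 < tau r q <= b - 1.
Proof. by rewrite /tau addn1 /= ltn_pmod // subn_gt0. Qed.

Lemma tau_mod r q : r + 3 * tau r q = q %[mod b - 1].
Proof.
rewrite /tau; set d := b - 1; set Y := q + (d - 1) * r.
rewrite -modnDmr -modnMmr modnDml modnMmr modnDmr.
have d_gt0 : 0 < d by rewrite subn_gt0.
have -> : r + 3 * (Y * inv3 d + (d - 1) + 1) = 3 * d + (3 * inv3 d * Y + r) by lia.
rewrite modnMDl -modnDml -modnMml inv3P // modnMml mul1n modnDml /Y.
by rewrite -addnA mul_subn1_add // mulnC addnC modnMDl.
Qed.

Lemma tau_uniq r q t : 0 < t <= b - 1 -> r + 3 * t = q %[mod b - 1] -> t = tau r q.
Proof.
move=> t_range t_mod; apply: eq_mod_in_range t_range (tau_bounds r q) _.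
by apply: mul3_modK h3 _; apply/eqP; rewrite -(eqn_modDl r) t_mod tau_mod.
Qed.

Lemma tau_leq r q t : 0 < t -> r + 3 * t = q %[mod b - 1] -> tau r q <= t.
Proof.
move=> t_gt0 t_mod; have [le_t|lt_t] := leqP t (b - 1).
  by rewrite -(tau_uniq (t := t)) ?t_gt0.
by apply: leq_trans (ltnW lt_t); case/andP: (tau_bounds r q).
Qed.

Lemma tau_modl r q q' : q = q' %[mod b - 1] -> tau r q = tau r q'.
Proof. by move=> q_mod; apply: tau_uniq; rewrite ?tau_bounds // tau_mod. Qed.

Lemma tau_self r q : q = r %[mod b - 1] -> tau r q = b - 1.
Proof.
move=> q_mod; apply/esym/tau_uniq; first by rewrite subn_gt0 hb /=.
by rewrite q_mod -modnDm modnMl addn0 modn_mod.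
Qed.

Lemma sum_tau r : \sum_(0 <= e < b - 1) tau r e = \sum_(0 <= e < b - 1) e.+1.
Proof.
have tau_gt0 e : 0 < tau r e by case/andP: (tau_bounds r e).
have lt_tau e : (tau r e).-1 < b - 1.
  by case/andP: (tau_bounds r e); case: (tau r e).
pose h (i : 'I_(b - 1)) := Ordinal (lt_tau i).
have h_inj : injective h.
  move=> i j /(congr1 val) tau_ij.
  have {}tau_ij : tau r i = tau r j.
    by rewrite -[tau r i]prednK // -[tau r j]prednK //; congr S; exact: tau_ij.
  apply: val_inj; have := tau_mod r i; rewrite tau_ij tau_mod.
  by rewrite !modn_small.
rewrite !big_mkord [RHS](reindex_inj h_inj) /=.
by apply: eq_bigr => i _; rewrite prednK.
Qed.

End Tau.

Definition sgen_mul b n := (b + 1) * b ^ n.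

Lemma sgenE b n i : sgen b n i = sgen_mul b n * b ^ i + 1.
Proof. by rewrite /sgen /sgen_mul expnD mulnA. Qed.

Lemma Tb'_powsum b n x : Tb' b n x <-> exists l, x = size l + sgen_mul b n * powsum b l.
Proof.
rewrite /Tb'; split.
- elim=> [|a y [i ->] _ [l ->]].
    by exists [::]; rewrite /powsum big_nil muln0.
  by exists (i :: l); rewrite /powsum big_cons sgenE /=; lia.
- case=> l ->; elim: l => [|i l IH]; first by rewrite /powsum big_nil muln0; constructor.
  have -> : size (i :: l) + sgen_mul b n * powsum b (i :: l)
          = sgen b n i + (size l + sgen_mul b n * powsum b l).
    by rewrite /powsum big_cons sgenE /=; lia.
  by apply: in_monoid_add => //; exists i.
Qed.

Section SgenMul.
Variables b n : nat.
Hypothesis hb : 1 < b.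
Local Notation c := (sgen_mul b n).

Lemma sgen_mul_gt0 : 0 < c.
Proof. by rewrite muln_gt0 addn1 expn_gt0 (ltnW hb). Qed.

Lemma pred_lt_sgen_mul : b - 1 < c.
Proof.
have pow_gt0 : 0 < b ^ n by rewrite expn_gt0 ltnW.
by have := leq_pmulr (b + 1) pow_gt0; rewrite /sgen_mul; lia.
Qed.

Lemma sgen_mul_succ_mod x : (c + 1) * x = 3 * x %[mod b - 1].
Proof.
suff c_mod : c + 1 = 3 %[mod b - 1] by rewrite -modnMml c_mod modnMml.
rewrite /sgen_mul -modnDml -modnMmr expn_mod_pred // modnMmr muln1 modnDml.
by rewrite -addnA -{1}(subnK (ltnW hb)) -addnA modnDl.
Qed.

Lemma sgen_mul_succ_leq : (c + 1) * b <= b ^ (n + 3).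
Proof.
have pow_gt0 : 0 < b ^ n by rewrite expn_gt0 ltnW.
rewrite /sgen_mul !expnD (expnS b 2) expnS expn1; nia.
Qed.

Lemma sgen_mul_pow : (b - 1) * c + b ^ n = b ^ (n + 2).
Proof.
rewrite /sgen_mul mulnDl mul1n mulnDr -addnA !mul_subn1_add ?(ltnW hb) //.
by rewrite expnD expnS expn1 [RHS]mulnC mulnA.
Qed.

Lemma legendre_sgen_mul_shift y : y < b ^ n ->
  legendre b ((b - 1) * c + y) + 2 = c + legendre b y.
Proof.
move=> lt_y; have d_gt0 : 0 < b - 1 by rewrite subn_gt0.
set x := b * (b - 1) + (b - 1).
have x_c : x * b ^ n = (b - 1) * c.
  by rewrite /x /sgen_mul mulnA mulnDr muln1 (mulnC b).
have := legendre_shift hb x lt_y.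
have lt_d : b - 1 < b by lia.
rewrite {2}/x (legendre_bmul hb _ lt_d) (legendre_small hb lt_d) addn0 x_c.
rewrite /x -[b * (b - 1)](mul_subn1_add _ (ltnW hb)) => e.
apply/eqP; rewrite -(eqn_pmul2l d_gt0) !mulnDr; apply/eqP; lia.
Qed.

Lemma sgen_mul_leq_legendre z : b ^ (n + 2) <= z -> c <= legendre b z.
Proof.
move=> le_z; apply: leq_trans (legendre_homo hb le_z).
have d_gt0 : 0 < b - 1 by rewrite subn_gt0.
have pow_gt0 : 0 < b ^ n by rewrite expn_gt0 ltnW.
rewrite -(leq_pmul2l d_gt0); have := legendre_pow hb (n + 2); rewrite -sgen_mul_pow; lia.
Qed.

End SgenMul.

Lemma digits_leq_sgen_mul b n : 1 < b -> 1 < n -> (b - 1) * (n + 3) <= sgen_mul b n.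
Proof. by move=> hb hn; have := pow_ge_mul hb (ltnW hn); rewrite /sgen_mul; nia. Qed.

Lemma legendre_margin b n k R t : 1 < b -> 1 < n -> 0 < t -> sgen_mul b n * t <= k ->
  R < (sgen_mul b n + 1) * (b - 1) -> R <= (b - 1) * legendre b (k + R).
Proof.
move=> hb hn t_gt0 le_k lt_R; have [le_cM|lt_M] := leqP ((sgen_mul b n + 1) * b) (k + R).
  have : sgen_mul b n + 1 <= legendre b (k + R).
    by apply: leq_trans (leq_div_legendre hb _); rewrite leq_divRL // ltnW.
  by move/(leq_mul (leqnn (b - 1))); rewrite mulnC; lia.
have := legendre_digits hb (leq_trans lt_M (sgen_mul_succ_leq n hb)).
have := leq_pmulr (sgen_mul b n) t_gt0; have := digits_leq_sgen_mul hb hn; lia.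
Qed.

Section AboveTau.
Variables b n : nat.
Hypotheses (hb : 1 < b) (h3 : (b - 1) %% 3 != 0).
Local Notation c := (sgen_mul b n).

(* Writing r + c q = k + c M as in Tb'_powsum with k = r + c t, a representation with t > 0
   exists exactly when q reaches this bound, tau being the least admissible t. *)
Definition above_tau r q := r + (c + 1) * tau b r q <= q.

Lemma above_tau_large r q : r < c -> (b - 1) * (2 * (c + 1)) <= q -> above_tau r q.
Proof.
move=> lt_rc le_q; apply: leq_trans le_q; rewrite /above_tau mulnCA mul2n -addnn.
have /andP[tau_gt0 le_tau] := tau_bounds hb r q.
apply: leq_add; last by rewrite [X in _ <= X]mulnC leq_mul2l le_tau orbT.
rewrite (leq_trans (ltnW lt_rc)) // (leq_trans (leq_addr 1 c)) //.
by rewrite leq_pmull // (leq_trans tau_gt0).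
Qed.

Lemma above_tau_self r q : q = r %[mod b - 1] -> above_tau r q = (r + (c + 1) * (b - 1) <= q).
Proof. by move=> q_mod; rewrite /above_tau tau_self. Qed.

Lemma powsum_cond_mem_Tb' r q : powsum_cond b r q -> Tb' b n (r + c * q).
Proof.
by move=> /(powsumP hb)[l size_l sum_l]; apply/Tb'_powsum; exists l; rewrite size_l sum_l.
Qed.

Lemma mem_Tb'_cond r q : r < c -> Tb' b n (r + c * q) -> powsum_cond b r q || above_tau r q.
Proof.
move=> lt_rc /Tb'_powsum[l]; have := powsum_cond_seq hb l.
move: (size l) (powsum b l) => k M /and3P[le_kM /eqP kM le_Mw] x_eq.
have r_eq : r = k %% c.
  by move: (congr1 (modn^~ c) x_eq); rewrite ![_ + c * _]addnC !(mulnC c) !modnMDl modn_small.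
have k_eq : k = r + c * (k %/ c) by rewrite r_eq addnC mulnC -divn_eq.
move: x_eq; rewrite k_eq -addnA -mulnDr => /addnI /eqP.
rewrite eqn_pmul2l ?(sgen_mul_gt0 n hb) // => /eqP q_eq.
move: (k %/ c) q_eq k_eq => t -> {r_eq} k_eq.
case: (posnP t) => [t0|t_gt0].
  by rewrite t0 muln0 addn0 in k_eq; rewrite t0 add0n -k_eq /powsum_cond le_kM le_Mw kM eqxx.
apply/orP; right; rewrite /above_tau.
have t_mod : r + 3 * t = t + M %[mod b - 1].
  rewrite -modnDmr -(sgen_mul_succ_mod n hb) modnDmr mulnDl mul1n addnA -k_eq addnC.
  by rewrite -modnDmr -kM modnDmr.
have := leq_mul (leqnn (c + 1)) (tau_leq hb h3 t_gt0 t_mod).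
rewrite mulnDl mul1n; lia.
Qed.

Definition tau_quot r e := (r + (c + 1) * tau b r e - e) %/ (b - 1).

Lemma tau_quotE r e : e < b - 1 -> (b - 1) * tau_quot r e + e = r + (c + 1) * tau b r e.
Proof.
move=> lt_e; have /andP[tau_gt0 _] := tau_bounds hb r e.
have le_e : e <= r + (c + 1) * tau b r e.
  have := leq_pmulr (c + 1) tau_gt0; have := @pred_lt_sgen_mul b n hb; lia.
have : (b - 1) %| r + (c + 1) * tau b r e - e.
  by rewrite -eqn_mod_dvd // -modnDmr (sgen_mul_succ_mod n hb) modnDmr tau_mod.
by rewrite /tau_quot [_ * (_ %/ _)]mulnC => /divnK->; rewrite subnK.
Qed.

Lemma sum_not_above_tau_block r e : r < c -> e < b - 1 ->
  \sum_(0 <= a < 2 * (c + 1)) ~~ above_tau r ((b - 1) * a + e) = tau_quot r e.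
Proof.
move=> lt_rc lt_e; have d_gt0 : 0 < b - 1 by rewrite subn_gt0.
have tau_e a : tau b r ((b - 1) * a + e) = tau b r e.
  by apply: (tau_modl hb h3); rewrite mulnC modnMDl.
rewrite (eq_bigr (fun a => nat_of_bool (a < tau_quot r e))) => [|a _]; last first.
  by rewrite /above_tau tau_e -tau_quotE // -ltnNge ltn_add2r ltn_pmul2l.
apply: sum_ltn_indicator; rewrite -(leq_pmul2l d_gt0).
have /andP[_ le_tau] := tau_bounds hb r e.
have := tau_quotE r lt_e; have := leq_mul (leqnn (c + 1)) le_tau.
have := leq_pmull (c + 1) d_gt0; lia.
Qed.

Lemma sum_not_above_tau r : r < c ->
  2 * \sum_(0 <= q < (b - 1) * (2 * (c + 1))) ~~ above_tau r q = 2 * r + c * b + 2.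
Proof.
move=> lt_rc; have d_gt0 : 0 < b - 1 by rewrite subn_gt0.
rewrite sum_block exchange_big_nat (eq_big_nat _ _ (F2 := tau_quot r)) => [|e /andP[_ lt_e]];
  last exact: sum_not_above_tau_block.
have sum_quot : (b - 1) * \sum_(0 <= e < b - 1) tau_quot r e + \sum_(0 <= e < b - 1) e
    = r * (b - 1) + (c + 1) * (\sum_(0 <= e < b - 1) e + (b - 1)).
  rewrite big_distrr -big_split (eq_big_nat _ _ (F2 := fun e => r + (c + 1) * tau b r e))
    => [|e /andP[_ lt_e]]; last exact: tau_quotE.
  rewrite big_split -big_distrr sum_tau // sum_nat_const_nat subn0 mulnC.
  rewrite (eq_bigr (fun e => e + 1)) => [|e _]; last by rewrite addn1.
  by rewrite big_split /= sum_nat_const_nat subn0 muln1.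
have := double_sum_id (b - 1); move: sum_quot.
move: (\sum_(0 <= e < b - 1) tau_quot r e) (\sum_(0 <= e < b - 1) e) => S I e1 e2.
apply/eqP; rewrite -(eqn_pmul2l d_gt0); apply/eqP.
move: (sgen_mul b n) e1 => C e1; rewrite -(subnK (ltnW hb)).
case: (b - 1) d_gt0 e1 e2 => // d _ e1 e2.
have := congr1 (muln 2) e1; have := congr1 (muln C) e2; rewrite /=; lia.
Qed.

Lemma sum_powsum_cond r : r < c ->
  \sum_(0 <= q < (b - 1) * (2 * (c + 1))) (powsum_cond b r q && ~~ above_tau r q)
  = \sum_(0 <= j < c + 1) (j <= legendre b (r + (b - 1) * j)).
Proof.
move=> lt_rc; have d_gt0 : 0 < b - 1 by rewrite subn_gt0.
have le_mid : r + (b - 1) * (c + 1) <= (b - 1) * (2 * (c + 1)).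
  by have := leq_pmull (c + 1) d_gt0; lia.
rewrite (@big_cat_nat _ _ _ r) ?(leq_trans (leq_addr _ _) le_mid) //=.
rewrite [X in _ + X](@big_cat_nat _ _ _ (r + (b - 1) * (c + 1))) ?leq_addr //=.
rewrite [X in X + _]big1_seq => [|q]; last first.
  by rewrite mem_index_iota /powsum_cond => /andP[_ /andP[_ /ltn_geF->]].
rewrite [X in _ + (_ + X)]big1_seq ?add0n ?addn0 => [|q]; last first.
  rewrite mem_index_iota /powsum_cond => /andP[_ /andP[le_q _]].
  by case: eqP => [q_mod|]; rewrite ?andbF //= above_tau_self // (mulnC (c + 1)) le_q andbF.
have := big_addn 0 (r + (b - 1) * (c + 1)) r xpredT
  (fun q => nat_of_bool (powsum_cond b r q && ~~ above_tau r q)).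
rewrite add0n addKn => ->; rewrite sum_block; apply: eq_big_nat => j /andP[_ lt_j].
rewrite big_ltn // addn0 addnC big1_seq ?addn0 => [|e]; last first.
  rewrite mem_index_iota /powsum_cond => /andP[_ /andP[e_gt0 lt_e]].
  have -> : ((b - 1) * j + e + r == r %[mod b - 1]) = false.
    rewrite -addnA mulnC modnMDl -[r in _ == r %[mod _]]add0n eqn_modDr mod0n modn_small //.
    by rewrite eqn0Ngt e_gt0.
  by rewrite andbF.
rewrite /powsum_cond above_tau_self; last by rewrite mulnC modnMDl.
have j_mod : r + (b - 1) * j == r %[mod b - 1] by rewrite addnC mulnC modnMDl.
rewrite add0n [_ * j + r]addnC leq_addr j_mod leq_add2l leq_pmul2l //=.
by rewrite (mulnC (c + 1)) leq_add2l leq_pmul2l // -ltnNge lt_j andbT.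
Qed.

End AboveTau.

Section Defects.
Variables b n : nat.
Hypotheses (hb : 1 < b) (hn : 1 < n).
Local Notation c := (sgen_mul b n).

Lemma defect_window q j : q < b * c -> legendre b q < j ->
  ((b - 1) * j <= q) = ((b - 1) * j <= q < (b - 1) * j + c).
Proof.
move=> lt_q lt_wj; suff -> : q < (b - 1) * j + c by rewrite andbT.
have lt_q' : q < b ^ (n + 3).
  rewrite (leq_trans lt_q) // (leq_trans _ (sgen_mul_succ_leq n hb)) //.
  by rewrite mulnC leq_mul2r leq_addr orbT.
have := legendre_digits hb lt_q'; have := leq_mul (leqnn (b - 1)) lt_wj.
by have := digits_leq_sgen_mul hb hn; rewrite mulnS; lia.
Qed.

(* Double counting of the pairs (r, j) through q = r + (b - 1) j. *)
Lemma sum_defect_exchange :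
  \sum_(0 <= r < c) \sum_(0 <= j < c + 1) (legendre b (r + (b - 1) * j) < j)
  = \sum_(0 <= q < b * c) (minn c (q %/ (b - 1)) - legendre b q).
Proof.
have d_gt0 : 0 < b - 1 by rewrite subn_gt0.
rewrite exchange_big_nat.
rewrite (eq_big_nat _ _ (F2 := fun j => \sum_(0 <= q < b * c)
    (((b - 1) * j <= q) && (q < (b - 1) * j + c)) * (legendre b q < j))) => [|j /andP[_ lt_j]].
  rewrite exchange_big_nat; apply: eq_big_nat => q /andP[_ lt_q].
  rewrite addn1 -sum_range_indicator; apply: eq_bigr => j _; rewrite leq_divRL // (mulnC j).
  by case: (ltnP (legendre b q) j) => lt_wj; rewrite /= ?muln0 // muln1 -defect_window.
rewrite -(sum_nat_window (fun q => nat_of_bool (legendre b q < j))) //.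
have le_jc : j <= c by rewrite -ltnS -[c.+1]addn1.
by rewrite -[b * c](mul_subn1_add _ (ltnW hb)) leq_add2r leq_pmul2l.
Qed.

Lemma sum_two_sub_legendre : \sum_(0 <= y < b ^ n) (2 - legendre b y) = 3 * b.
Proof.
have le_2b : b + b <= b ^ n.
  by have := pow_ge_mul hb (ltnW hn); have := leq_mul (leqnn b) hn; lia.
rewrite -(subnKC le_2b) !sum_nat_shift.
rewrite [X in X + _ + _](eq_big_nat _ _ (F2 := fun=> 2)) => [|y /andP[_ lt_y]]; last first.
  by rewrite legendre_small.
rewrite [X in _ + X + _](eq_big_nat _ _ (F2 := fun=> 1)) => [|i /andP[_ lt_i]]; last first.
  by rewrite -{2}[b]muln1 legendre_bmul // legendre_small.
rewrite [X in _ + X]big1_seq => [|i _]; last first.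
  apply/eqP; rewrite subn_eq0 (leq_trans _ (leq_div_legendre hb _)) //.
  by rewrite leq_divRL ?(ltnW hb) // mul2n -addnn leq_addr.
by rewrite !sum_nat_const_nat !subn0 addn0; lia.
Qed.

Lemma sum_defect_regions :
  \sum_(0 <= q < b * c) (minn c (q %/ (b - 1)) - legendre b q)
  = \sum_(0 <= q < (b - 1) * c) (q %/ (b - 1) - legendre b q) + 3 * b.
Proof.
have d_gt0 : 0 < b - 1 by rewrite subn_gt0.
have -> : b * c = (b - 1) * c + b ^ n + b * b ^ n.
  by rewrite -[b * c](mul_subn1_add _ (ltnW hb)) -addnA /sgen_mul mulnDl mul1n [b ^ n + _]addnC.
rewrite !sum_nat_shift.
rewrite [X in X + _ + _](eq_big_nat _ _ (F2 := fun q => q %/ (b - 1) - legendre b q))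
  => [|q /andP[_ lt_q]]; last by rewrite (minn_idPr _) // ltnW // ltn_divLR // mulnC.
rewrite [X in _ + X + _](eq_big_nat _ _ (F2 := fun y => 2 - legendre b y)) => [|y /andP[_ lt_y]].
  rewrite sum_two_sub_legendre [X in _ + X]big1_seq ?addn0 // => i _.
  apply/eqP; rewrite subn_eq0 (leq_trans (geq_minl _ _)) // sgen_mul_leq_legendre //.
  by rewrite -(sgen_mul_pow n hb) leq_addr.
rewrite (minn_idPl _); last by rewrite leq_divRL // mulnC leq_addr.
by have := legendre_sgen_mul_shift hb lt_y; lia.
Qed.

Lemma sum_defect :
  2 * \sum_(0 <= q < b * c) (minn c (q %/ (b - 1)) - legendre b q) + b ^ n * (n + 2)
  = 6 * b + b ^ n * (b ^ 2 * (n + 1) + b).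
Proof.
have d_gt0 : 0 < b - 1 by rewrite subn_gt0.
rewrite sum_defect_regions sumnB => [|q _]; last by rewrite leq_divRL // mulnC legendre_leq.
have sum_div : \sum_(0 <= q < (b - 1) * c) q %/ (b - 1) = (b - 1) * \sum_(0 <= a < c) a.
  rewrite sum_block big_distrr; apply: eq_bigr => a _.
  rewrite (eq_big_nat _ _ (F2 := fun=> a)) => [|e /andP[_ lt_e]].
    by rewrite sum_nat_const_nat subn0.
  by rewrite mulnC divnMDl // (divn_small lt_e) addn0.
have sum_low : \sum_(0 <= q < (b - 1) * c) legendre b q
    + \sum_(0 <= y < b ^ n) legendre b ((b - 1) * c + y) = \sum_(0 <= q < b ^ (n + 2)) legendre b q.
  by rewrite -sum_nat_shift (sgen_mul_pow n hb).
have sum_mid : \sum_(0 <= y < b ^ n) legendre b ((b - 1) * c + y) + b ^ n * 2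
    = b ^ n * c + \sum_(0 <= y < b ^ n) legendre b y.
  have -> : b ^ n * 2 = \sum_(0 <= y < b ^ n) 2 by rewrite sum_nat_const_nat subn0.
  rewrite -big_split.
  rewrite (eq_big_nat _ _ (F2 := fun y => c + legendre b y)) => [|y /andP[_ lt_y]].
    by rewrite big_split sum_nat_const_nat subn0 mulnC.
  exact: legendre_sgen_mul_shift.
have le_low : \sum_(0 <= q < (b - 1) * c) legendre b q <= (b - 1) * \sum_(0 <= a < c) a.
  by rewrite -sum_div; apply: leq_sum => q _; rewrite leq_divRL // mulnC legendre_leq.
have := sum_legendre_pow hb n; have := sum_legendre_pow hb (n + 2); have := double_sum_id c.
rewrite sum_div; move: le_low sum_low sum_mid.
move: (\sum_(0 <= a < c) a) (\sum_(0 <= q < (b - 1) * c) legendre b q).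
move: (\sum_(0 <= y < b ^ n) legendre b ((b - 1) * c + y)) (\sum_(0 <= y < b ^ n) legendre b y).
move: (\sum_(0 <= q < b ^ (n + 2)) legendre b q) => W2 B W1 I A.
rewrite /sgen_mul expnD expnS expn1; move: (b ^ n) => P.
rewrite -(subnK (ltnW hb)) addn1 subn1 /=.
move: (b - 1) d_gt0 => d d_gt0 le_A e1 e2 e3 e4 e5.
have := congr1 (muln d) (subnK le_A); move: (d * I - A) => X eX.
apply/eqP; rewrite -(eqn_pmul2l d_gt0); apply/eqP.
have := congr1 (muln (2 * d)) e1; have := congr1 (muln (2 * d)) e2.
have := congr1 (muln (d * d)) e3; lia.
Qed.

End Defects.

Lemma has_genus_count (S : nat -> Prop) (gap : pred nat) N :
  (forall x, S x <-> ~~ gap x) -> (forall x, gap x -> x < N) ->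
  has_genus S (\sum_(0 <= x < N) gap x).
Proof.
move=> S_gap gap_lt; exists [seq x <- iota 0 N | gap x]; split; [|split].
- by rewrite filter_uniq // iota_uniq.
- move=> x; rewrite mem_filter mem_iota add0n S_gap; split => [/andP[gx _]|]; first by rewrite gx.
  by case: (boolP (gap x)) => // gx _; rewrite gap_lt.
- rewrite size_filter -sum1_count big_mkcond /index_iota subn0.
  by apply: eq_bigr => x _; case: (gap x).
Qed.

Section Genus.
Variables b n : nat.
Hypotheses (hb : 1 < b) (hn : 1 < n) (h3 : (b - 1) %% 3 != 0).
Local Notation c := (sgen_mul b n).
Local Notation N := ((b - 1) * (2 * (c + 1))).

Lemma above_tau_mem_Tb' r q : above_tau b n r q -> Tb' b n (r + c * q).
Proof.
rewrite /above_tau; set s := tau b r q => le_q.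
have s_gt0 : 0 < s by case/andP: (tau_bounds hb r q).
have m_gt0 : 0 < (c + 1) * (b - 1) by rewrite muln_gt0 addn1 subn_gt0 hb.
set X := q - (r + (c + 1) * s).
have X_mod : X = 0 %[mod b - 1].
  apply/eqP; rewrite mod0n -/(dvdn _ _) -eqn_mod_dvd //.
  by rewrite -modnDmr (sgen_mul_succ_mod n hb) modnDmr tau_mod.
have X_eq := divn_eq X ((c + 1) * (b - 1)); have lt_R := ltn_pmod X m_gt0.
move: (X %/ _) (X %% _) X_eq lt_R => u R X_eq lt_R.
set t := s + (b - 1) * u.
have q_eq : q = r + (c + 1) * t + R.
  by move: X_eq; rewrite /X /t mulnDr mulnA (mulnC u); lia.
have R_mod : R = 0 %[mod b - 1].
  by rewrite -X_mod X_eq mulnA modnMDl.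
have t_gt0 : 0 < t by rewrite addn_gt0 s_gt0.
have [l size_l sum_l] : exists2 l, size l = r + c * t & powsum b l = r + c * t + R.
  apply/(powsumP hb)/and3P; split; first exact: leq_addr.
    by rewrite -modnDmr R_mod mod0n addn0.
  by rewrite leq_add2l (legendre_margin hb hn t_gt0 (leq_addl r _) lt_R).
apply/Tb'_powsum; exists l; rewrite size_l sum_l q_eq; nia.
Qed.

Lemma mem_Tb' r q : r < c -> Tb' b n (r + c * q) <-> powsum_cond b r q || above_tau b n r q.
Proof.
move=> lt_rc; split; first exact: mem_Tb'_cond.
by case/orP; [exact: powsum_cond_mem_Tb' | exact: above_tau_mem_Tb'].
Qed.

Definition Tb'_gap r q := ~~ (powsum_cond b r q || above_tau b n r q).

Lemma sum_gap_residue r : r < c ->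
  2 * \sum_(0 <= q < N) Tb'_gap r q
  + 2 * \sum_(0 <= j < c + 1) (j <= legendre b (r + (b - 1) * j)) = 2 * r + c * b + 2.
Proof.
move=> lt_rc; rewrite -sum_powsum_cond // -mulnDr -big_split /= -sum_not_above_tau //.
by congr (2 * _); apply: eq_bigr => q _; rewrite /Tb'_gap; case: powsum_cond; case: above_tau.
Qed.

Lemma double_genus :
  2 * \sum_(0 <= x < c * N) Tb'_gap (x %% c) (x %/ c)
  = 6 * b + (b ^ (2 * n) * ((b ^ 3 + b ^ 2) - (b + 1)) + b ^ n * (b ^ 2 * (n + 1) - (n + 3))).
Proof.
have c_gt0 := sgen_mul_gt0 n hb.
rewrite mulnC sum_block exchange_big_nat.
rewrite (eq_big_nat _ _ (F2 := fun r => \sum_(0 <= q < N) Tb'_gap r q))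
  => [|r /andP[_ lt_r]]; last first.
  apply: eq_bigr => q _; congr Tb'_gap; first by rewrite mulnC modnMDl modn_small.
  by rewrite mulnC divnMDl // divn_small // addn0.
have gaps : \sum_(0 <= r < c) (2 * \sum_(0 <= q < N) Tb'_gap r q
    + 2 * \sum_(0 <= j < c + 1) (j <= legendre b (r + (b - 1) * j)))
    = \sum_(0 <= r < c) (2 * r + (c * b + 2)).
  by apply: eq_big_nat => r /andP[_ lt_r]; rewrite sum_gap_residue // addnA.
have split_defect : \sum_(0 <= r < c) (\sum_(0 <= j < c + 1) (j <= legendre b (r + (b - 1) * j))
    + \sum_(0 <= j < c + 1) (legendre b (r + (b - 1) * j) < j)) = \sum_(0 <= r < c) (c + 1).
  apply: eq_bigr => r _; rewrite -big_split /= -[RHS]subn0 -[RHS]muln1 -sum_nat_const_nat.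
  by apply: eq_bigr => j _; case: leqP.
rewrite !big_split /= -!big_distrr /= !sum_nat_const_nat !subn0 in gaps split_defect.
rewrite (sum_defect_exchange hb hn) in split_defect.
have := sum_defect hb hn; have := double_sum_id c; move: gaps split_defect.
move: (\sum_(0 <= r < c) \sum_(0 <= q < N) Tb'_gap r q) (\sum_(0 <= r < c) r).
move: (\sum_(0 <= r < c) \sum_(0 <= j < c + 1) (j <= legendre b (r + (b - 1) * j))).
move: (\sum_(0 <= q < b * c) (minn c (q %/ (b - 1)) - legendre b q)) => D E G I.
have -> : b ^ (2 * n) = b ^ n * b ^ n by rewrite mul2n -addnn expnD.
rewrite /sgen_mul (expnS b 2) (expnS b 1) expn1; move: (b ^ n) => P.
have le3 : b + 1 <= b * (b * b) + b * b by have := leq_mul hb hb; nia.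
have len : n + 3 <= b * b * (n + 1) by have := leq_mul hb hb; nia.
rewrite !mulnBr; have := leq_mul (leqnn (P * P)) le3; have := leq_mul (leqnn P) len; lia.
Qed.

Lemma Tb'_has_genus : has_genus (Tb' b n) (\sum_(0 <= x < c * N) Tb'_gap (x %% c) (x %/ c)).
Proof.
have c_gt0 := sgen_mul_gt0 n hb.
apply: has_genus_count => x.
  by rewrite /Tb'_gap negbK {1}(divn_eq x c) addnC mulnC; apply: mem_Tb'; rewrite ?ltn_pmod.
apply: contraTT; rewrite -leqNgt /Tb'_gap negbK => le_x; apply/orP; right.
by apply: above_tau_large; rewrite ?ltn_pmod // leq_divRL // mulnC.
Qed.

End Genus.

Theorem mainTheorem14 (b n : nat) (hb : 2 <= b) (hb3 : b %% 3 != 1)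
    (hn : 2 <= n) :
  exists g : nat, has_genus (Tb' b n) g /\
    2 * g = 6 * b + (b ^ (2 * n) * ((b ^ 3 + b ^ 2) - (b + 1))
                     + b ^ n * (b ^ 2 * (n + 1) - (n + 3))).
Proof.
have h3 : (b - 1) %% 3 != 0.
  by apply: contra hb3 => /eqP d_mod; rewrite -(subnK (ltnW hb)) -modnDml d_mod.
by eexists; split; [exact: Tb'_has_genus | exact: double_genus].
Qed.
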